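(* Let $\phi:\mathbb{R}^\ell\to[0,\infty)$ be continuously differentiable and let $H=\prod_{i=1}^\ell[a_i,b_i]$ with $a_i<b_i$ be a hyperrectangle with corners $z_1,\dots,z_{2^\ell}$ and side lengths $\delta z_i=b_i-a_i$, $i=1,\dots,\ell$. Let $L_1,\dots,L_\ell$ satisfy $L_i\ge|(\nabla\phi(z))_i|$ for all $z\in H$ and $i=1,\dots,\ell$. Let $\tau\in\mathbb{R}$ and $\gamma^*\ge\max_{i=1,\dots,2^\ell}\phi(z_i)$. If $$\sum_{j=1}^\ell L_j\,\delta z_j<2\gamma^*+2\tau-\frac{2\sum_{i=1}^{2^\ell}\phi(z_i)}{2^\ell},$$ then $\phi(z)<\gamma^*+\tau$ for all $z\in H$. *)

From HB Require Import structures.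
From mathcomp Require Import all_boot all_order all_algebra.
From mathcomp Require Import all_classical all_reals all_analysis.
Set Implicit Arguments. Unset Strict Implicit. Unset Printing Implicit Defensive.
Import Order.TTheory GRing.Theory Num.Theory.
Import numFieldNormedType.Exports.
Local Open Scope ring_scope.

Definition unitv {R : realType} {l : nat} (i : 'I_l) : 'rV[R]_l := delta_mx 0 i.

Definition gradc {R : realType} {l : nat} (phi : 'rV[R]_l -> R) (z : 'rV[R]_l)
  (i : 'I_l) : R := 'D_(unitv i) phi z.

(* continuously differentiable on R^l: differentiable everywhere, and all
   partial derivatives are continuous (equivalent to C^1 in finite dimension) *)
Definition C1 {R : realType} {l : nat} (phi : 'rV[R]_l -> R) : Prop :=
  (forall z, differentiable phi z) /\ (forall i : 'I_l, continuous (fun z => gradc phi z i)).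

Definition in_box {R : realType} {l : nat} (a b : 'rV[R]_l) (z : 'rV[R]_l) : Prop :=
  forall i : 'I_l, a 0 i <= z 0 i <= b 0 i.

(* corners of H, indexed by s : {ffun 'I_l -> bool} (2^l of them, distinct
   since a_i < b_i): coordinate i is b_i if s i, else a_i *)
Definition corner {R : realType} {l : nat} (a b : 'rV[R]_l) (s : {ffun 'I_l -> bool})
  : 'rV[R]_l := \row_i (if s i then b 0 i else a 0 i).

From HB Require Import structures.
From mathcomp Require Import all_boot all_order all_algebra.
From mathcomp Require Import all_classical all_reals all_analysis.
From mathcomp Require Import ring lra.
Import Order.TTheory GRing.Theory Num.Theory.
Import numFieldNormedType.Exports.
Local Open Scope ring_scope.

(* For every corner c of H, the mean value theorem on the segment [c, z] and
   the bounds on the partial derivatives give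
   phi z <= phi c + sum_j L_j |z_j - c_j|.  Averaging over the 2^l corners,
   and using that for each j exactly half of the corners have c_j = a_j and
   half have c_j = b_j, so that the average of |z_j - c_j| is (b_j - a_j)/2,
   yields phi z <= (sum_c phi c) / 2^l + (sum_j L_j (b_j - a_j)) / 2, which the
   hypothesis bounds by gstar + tau. *)

Section LineDerivative.
Context {R : numFieldType} {V W : normedModType R}.

Lemma is_derive_line (f : V -> W) (w v : V) (t : R) :
  differentiable f (w + t *: v) ->
  is_derive t 1 (fun s => f (w + s *: v)) ('D_v f (w + t *: v)).
Proof.
move=> df.
have quotE : (fun h : R => h^-1 *: (((fun s => f (w + s *: v)) \o shift t) (h *: 1)
                                    - f (w + t *: v)))
           = (fun h : R => h^-1 *: ((f \o shift (w + t *: v)) (h *: v) - f (w + t *: v))).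
  apply/funext => h /=; congr (_ *: (f _ - _)).
  by rewrite [h *: 1]mulr1 scalerDl addrCA addrC.
apply: DeriveDef; last by rewrite /derive quotE.
by have := diff_derivable (v := v) df; rewrite /derivable quotE.
Qed.

End LineDerivative.

Lemma MVT_line {R : realType} {V : normedModType R} (f : V -> R) (w z : V) :
  (forall x, differentiable f x) ->
  exists2 c : R, c \in `[0, 1] & f z - f w = 'D_(z - w) f (w + c *: (z - w)).
Proof.
move=> df.
have line_derive t := @is_derive_line _ _ _ f w (z - w) t (df _).
have [|c c01 mvt] := MVT_segment ler01 (fun t _ => line_derive t).
  by apply: derivable_within_continuous => t _; case: (line_derive t).
by exists c; move: mvt; rewrite scale0r scale1r addr0 subrKC subr0 mulr1.
Qed.

Lemma derive_gradc {R : realType} {l : nat} (phi : 'rV[R]_l -> R) (y v : 'rV[R]_l) :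
  differentiable phi y -> 'D_v phi y = \sum_(j < l) v 0 j * gradc phi y j.
Proof.
move=> dphi; rewrite deriveE // {1}(row_sum_delta v) linear_sum.
by apply: eq_bigr => j _; rewrite linearZ /gradc /unitv deriveE.
Qed.

Lemma sum_ffun_bool_at {V : nmodType} {I : finType} (j : I) (g : bool -> V) :
  (\sum_(s : {ffun I -> bool}) g (s j)) *+ 2 = (g true + g false) *+ 2 ^ #|I|.
Proof.
pose flip (s : {ffun I -> bool}) := [ffun i => if i == j then ~~ s i else s i].
have flipK : involutive flip.
  by move=> s; apply/ffunP => i; rewrite !ffunE; case: eqP => // ->; rewrite negbK.
have -> : (\sum_(s : {ffun I -> bool}) g (s j)) *+ 2
        = \sum_(s : {ffun I -> bool}) (g (s j) + g (~~ s j)).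
  rewrite mulr2n [X in _ + X](reindex_inj (inv_inj flipK)) -big_split /=.
  by apply: eq_bigr => s _; rewrite ffunE eqxx.
rewrite (eq_bigr (fun _ => g true + g false)); last by move=> s _; case: (s j); rewrite // addrC.
by rewrite sumr_const card_ffun card_bool.
Qed.

Section Box.
Context {R : realType} {l : nat} {a b : 'rV[R]_l}.

Lemma in_box_segment (w z : 'rV[R]_l) (c : R) :
  in_box a b w -> in_box a b z -> c \in `[0, 1] -> in_box a b (w + c *: (z - w)).
Proof.
rewrite in_itv /= => hw hz /andP[c0 c1] i; rewrite !mxE.
by have /andP[? ?] := hw i; have /andP[? ?] := hz i; apply/andP; split; nra.
Qed.

Lemma corner_in_box (s : {ffun 'I_l -> bool}) :
  (forall i, a 0 i <= b 0 i) -> in_box a b (corner a b s).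
Proof. by move=> leab i; rewrite mxE; case: (s i); rewrite lexx leab. Qed.

Lemma sum_dist_corners {z : 'rV[R]_l} {j : 'I_l} : a 0 j <= z 0 j <= b 0 j ->
  (\sum_(s : {ffun 'I_l -> bool}) `|z 0 j - corner a b s 0 j|) *+ 2
  = (b 0 j - a 0 j) *+ 2 ^ l.
Proof.
move=> /andP[az zb].
under eq_bigr do rewrite mxE.
rewrite (sum_ffun_bool_at j (fun c => `|z 0 j - if c then b 0 j else a 0 j|)) card_ord /=.
by rewrite ler0_norm ?subr_le0 // ger0_norm ?subr_ge0 // opprB addrA subrK.
Qed.

Context {phi : 'rV[R]_l -> R} {L : 'rV[R]_l}.
Hypothesis phi_diff : forall z, differentiable phi z.
Hypothesis gradc_bound :
  forall z, in_box a b z -> forall i : 'I_l, `|gradc phi z i| <= L 0 i.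

Lemma box_lipschitz (w z : 'rV[R]_l) : in_box a b w -> in_box a b z ->
  phi z - phi w <= \sum_(j < l) L 0 j * `|z 0 j - w 0 j|.
Proof.
move=> hw hz; have [c c01 ->] := MVT_line phi w z phi_diff.
rewrite derive_gradc //; apply: le_trans (ler_norm _) _.
apply: le_trans (ler_norm_sum _ _ _) _; apply: ler_sum => j _.
rewrite normrM mulrC !mxE ler_wpM2r //.
by apply: gradc_bound; apply: in_box_segment.
Qed.

Lemma le_corner_average (z : 'rV[R]_l) :
  (forall i, a 0 i <= b 0 i) -> in_box a b z ->
  phi z <= (\sum_(s : {ffun 'I_l -> bool}) phi (corner a b s)) / 2 ^+ l
           + (\sum_(j < l) L 0 j * (b 0 j - a 0 j)) / 2.
Proof.
move=> leab hz.
set C := \sum_(s : {ffun 'I_l -> bool}) phi (corner a b s).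
set S := \sum_(j < l) L 0 j * (b 0 j - a 0 j).
pose dist s := \sum_(j < l) L 0 j * `|z 0 j - corner a b s 0 j|.
have sum_dist : (\sum_s dist s) *+ 2 = S *+ 2 ^ l.
  rewrite exchange_big /= -sumrMnl /S -[RHS]sumrMnl; apply: eq_bigr => j _.
  by rewrite -mulr_sumr -mulrnAr (sum_dist_corners (hz j)) mulrnAr.
have sum_lipschitz : phi z *+ 2 ^ l <= C + \sum_s dist s.
  have -> : phi z *+ 2 ^ l = \sum_(s : {ffun 'I_l -> bool}) phi z.
    by rewrite sumr_const card_ffun card_bool card_ord.
  rewrite -big_split /=.
  apply: ler_sum => s _; rewrite -lerBlDl.
  by apply: box_lipschitz => //; apply: corner_in_box.
have doubled : phi z * 2 ^+ l * 2 <= C * 2 + S * 2 ^+ l.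
  by rewrite -natrX !mulr_natr -sum_dist -mulrnDl; apply: ler_wMn2r.
have N2_gt0 : (0 : R) < 2 ^+ l * 2 by rewrite mulr_gt0 ?exprn_gt0.
rewrite -(ler_pM2r N2_gt0) mulrA.
have -> : (C / 2 ^+ l + S / 2) * (2 ^+ l * 2) = C * 2 + S * 2 ^+ l.
  by field; rewrite expf_neq0.
exact: doubled.
Qed.

End Box.

Theorem lemma3p10 (R : realType) (l : nat) (phi : 'rV[R]_l -> R)
  (a b L : 'rV[R]_l) (tau gstar : R) :
  C1 phi ->
  (forall z, 0 <= phi z) ->
  (forall i : 'I_l, a 0 i < b 0 i) ->
  (forall z, in_box a b z -> forall i : 'I_l, `|gradc phi z i| <= L 0 i) ->
  (forall s : {ffun 'I_l -> bool}, phi (corner a b s) <= gstar) ->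
  \sum_(j < l) L 0 j * (b 0 j - a 0 j) <
    2 * gstar + 2 * tau
    - 2 * (\sum_(s : {ffun 'I_l -> bool}) phi (corner a b s)) / (2 ^+ l) ->
  forall z, in_box a b z -> phi z < gstar + tau.
Proof.
move=> [phi_diff _] _ ltab gradc_bound _ hsum z hz.
have := le_corner_average phi_diff gradc_bound z (fun i => ltW (ltab i)) hz.
lra.
Qed.
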